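(* Suppose $\mu_i\in\Pr(\mathbb{T})$ ($i\in\omega$) satisfy $\mu_i\,\hat{}\,\mu_i=\mu_i$, and there are sets $E_i\subseteq\mathbb{T}$ ($i\in\omega$) with $\mu_i(E_j)=1$ if $i=j$ and $\mu_i(E_j)=0$ otherwise. Then no limit point of $\{\mu_i:i\in\omega\}$ (in the weak* topology on $\Pr(\mathbb{T})$) is idempotent, i.e. every such limit point $\mu$ satisfies $\mu\,\hat{}\,\mu\neq\mu$.
   Context: For $a,b\subseteq(0,1]$ put $a\,\hat{}\,b=\tfrac12 a\cup\tfrac12(b+1)$; $\mathbb{T}$ is the set generated from $\mathbf{1}=\{1\}$ by $\hat{}$ (free binary system on one generator). $\Pr(\mathbb{T})$ is the set of finitely additive probability measures on $\mathbb{T}$, viewed as positive normalized functionals on $\ell^\infty(\mathbb{T})$ with the weak* topology; $(\mu\,\hat{}\,\nu)(f)=\int\int f(x\,\hat{}\,y)\,d\nu(y)\,d\mu(x)$. *)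

From Stdlib Require Import Reals List ClassicalEpsilon.
Open Scope R_scope.

(* The free binary system on one generator: T is generated from the
   generator [one] (the set {1}) by the binary operation [hat] (a ^ b).
   Freeness means T is (isomorphic to) the type of binary terms below. *)
Inductive T : Type :=
| one : T
| hat : T -> T -> T.

Definition bounded (f : T -> R) : Prop :=
  exists M : R, forall x : T, Rabs (f x) <= M.

(* functionals on l^oo(T); only their values on bounded functions matter *)
Definition Fun := (T -> R) -> R.

(* Pr(T): positive normalized linear functionals on l^oo(T)
   (= finitely additive probability measures on T). *)
Definition isPr (m : Fun) : Prop :=
  (forall f g, bounded f -> bounded g -> m (fun x => f x + g x) = m f + m g) /\
  (forall (c : R) f, bounded f -> m (fun x => c * f x) = c * m f) /\
  (forall f, bounded f -> (forall x, 0 <= f x) -> 0 <= m f) /\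
  m (fun _ => 1) = 1.

Definition feq (m n : Fun) : Prop := forall f, bounded f -> m f = n f.

Definition conv (mu nu : Fun) : Fun :=
  fun f => mu (fun x => nu (fun y => f (hat x y))).

Definition idempotent (mu : Fun) : Prop := feq (conv mu mu) mu.

Definition indic (E : T -> Prop) : T -> R :=
  fun x => if excluded_middle_informative (E x) then 1 else 0.

Definition meas (mu : Fun) (E : T -> Prop) : R := mu (indic E).

Definition weakstar_limit_point (mus : nat -> Fun) (mu : Fun) : Prop :=
  forall (fs : list (T -> R)) (eps : R),
    (forall f, In f fs -> bounded f) -> 0 < eps ->
    exists i : nat, ~ feq (mus i) mu /\
      forall f, In f fs -> Rabs (mus i f - mu f) < eps.

(* Disjointify the sets [E j] into [F j]; each [mus i] is carried by [F i].
   Let [S] be the set of products [a ^ b] with [a], [b] in a common [F j].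
   Idempotence of [mus i] gives [mus i S >= mus i (F i) ^ 2 = 1], so every
   weak* limit point [mu] has [mu S = 1].  On the other hand [mu (F j) = 0]
   for all [j], because [mus i (F j) = 0] for every [i <> j]; by disjointness
   each section [{y | x ^ y \in S}] is null for [mu], so [(mu ^ mu) S = 0]. *)
From Pilot Require Import Defs.
From Stdlib Require Import Reals List.
From Stdlib Require Import Lra Lia Classical ClassicalEpsilon FunctionalExtensionality.
Open Scope R_scope.
(* [Reals] also exports a [bounded] (on [R -> Prop]). *)
Local Notation bounded := Defs.bounded.

Lemma indic_1 (P : T -> Prop) x : P x -> indic P x = 1.
Proof. intros H; unfold indic; destruct excluded_middle_informative; tauto. Qed.

Lemma indic_0 (P : T -> Prop) x : ~ P x -> indic P x = 0.
Proof. intros H; unfold indic; destruct excluded_middle_informative; tauto. Qed.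

Lemma indic_01 (P : T -> Prop) x : 0 <= indic P x <= 1.
Proof. unfold indic; destruct excluded_middle_informative; lra. Qed.

Lemma bounded_01 (f : T -> R) : (forall x, 0 <= f x <= 1) -> bounded f.
Proof.
  intros H; exists 1; intros x; specialize (H x).
  rewrite Rabs_right; lra.
Qed.

Lemma bounded_indic P : bounded (indic P).
Proof. apply bounded_01, indic_01. Qed.

Lemma bounded_const c : bounded (fun _ => c).
Proof. exists (Rabs c); intros; lra. Qed.

Lemma bounded_add f g : bounded f -> bounded g -> bounded (fun x => f x + g x).
Proof.
  intros [M HM] [N HN]; exists (M + N); intros x.
  specialize (HM x); specialize (HN x).
  eapply Rle_trans; [apply Rabs_triang | lra].
Qed.

Lemma bounded_scale c f : bounded f -> bounded (fun x => c * f x).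
Proof.
  intros [M HM]; exists (Rabs c * M); intros x.
  rewrite Rabs_mult; apply Rmult_le_compat_l; [apply Rabs_pos | apply HM].
Qed.

Lemma fun_ext_eq (m : Fun) f g : (forall x, f x = g x) -> m f = m g.
Proof. intros H; f_equal; apply functional_extensionality; exact H. Qed.

Section ProbabilityFunctional.

Variable m : Fun.
Hypothesis Hm : isPr m.

Lemma pr_add f g : bounded f -> bounded g -> m (fun x => f x + g x) = m f + m g.
Proof. apply Hm. Qed.

Lemma pr_scale c f : bounded f -> m (fun x => c * f x) = c * m f.
Proof. apply Hm. Qed.

Lemma pr_const c : m (fun _ => c) = c.
Proof.
  rewrite (fun_ext_eq m _ (fun _ => c * 1)) by (intros; ring).
  rewrite pr_scale by apply bounded_const.
  destruct Hm as (_ & _ & _ & H1); rewrite H1; ring.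
Qed.

Lemma pr_mono f g : bounded f -> bounded g -> (forall x, f x <= g x) -> m f <= m g.
Proof.
  intros Hf Hg Hfg.
  assert (Hpos : 0 <= m (fun x => g x + -1 * f x)).
  { destruct Hm as (_ & _ & Hp & _); apply Hp.
    - apply bounded_add, bounded_scale; assumption.
    - intros x; specialize (Hfg x); lra. }
  rewrite pr_add, pr_scale in Hpos by auto using bounded_scale; lra.
Qed.

Lemma pr_01 f : (forall x, 0 <= f x <= 1) -> 0 <= m f <= 1.
Proof.
  intros Hf; rewrite <- (pr_const 0), <- (pr_const 1).
  split; apply pr_mono; auto using bounded_01, bounded_const; apply Hf.
Qed.

Lemma meas_01 A : 0 <= meas m A <= 1.
Proof. apply pr_01, indic_01. Qed.

Lemma meas_mono (A B : T -> Prop) :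
  (forall x, A x -> B x) -> meas m A <= meas m B.
Proof.
  intros HAB; apply pr_mono; try apply bounded_indic.
  intros x; destruct (classic (A x)) as [Hx | Hx].
  - rewrite !indic_1; auto; lra.
  - rewrite (indic_0 _ _ Hx); apply indic_01.
Qed.

Lemma meas_empty (A : T -> Prop) : (forall x, ~ A x) -> meas m A = 0.
Proof.
  intros HA; unfold meas.
  rewrite (fun_ext_eq m _ (fun _ => 0)) by (intros x; apply indic_0, HA).
  apply pr_const.
Qed.

Lemma meas_union_le (A B : T -> Prop) :
  meas m (fun x => A x \/ B x) <= meas m A + meas m B.
Proof.
  unfold meas; rewrite <- pr_add by apply bounded_indic.
  apply pr_mono; auto using bounded_add, bounded_indic.
  intros x; pose proof (indic_01 A x); pose proof (indic_01 B x).
  pose proof (indic_01 (fun x => A x \/ B x) x).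
  destruct (classic (A x)) as [Hx | Hx]; [rewrite (indic_1 A x Hx); lra |].
  destruct (classic (B x)) as [Hy | Hy]; [rewrite (indic_1 B x Hy); lra |].
  rewrite indic_0 by tauto; lra.
Qed.

End ProbabilityFunctional.

Lemma conv_indic_rectangle m n (A B S : T -> Prop) :
  isPr m -> isPr n -> (forall a b, A a -> B b -> S (hat a b)) ->
  meas m A * meas n B <= conv m n (indic S).
Proof.
  intros Hm Hn HS.
  change (conv m n (indic S)) with (m (fun x => meas n (fun y => S (hat x y)))).
  unfold meas at 1; rewrite Rmult_comm, <- pr_scale by auto using bounded_indic.
  apply pr_mono; auto using bounded_scale, bounded_indic.
  { apply bounded_01; intros; apply meas_01, Hn. }
  intros x; destruct (classic (A x)) as [Hx | Hx].
  - rewrite indic_1, Rmult_1_r by exact Hx.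
    apply meas_mono; auto.
  - rewrite indic_0, Rmult_0_r by exact Hx; apply meas_01, Hn.
Qed.

Lemma conv_indic_eq0 m n (S : T -> Prop) :
  isPr m -> (forall x, meas n (fun y => S (hat x y)) = 0) ->
  conv m n (indic S) = 0.
Proof.
  intros Hm Hsec.
  change (conv m n (indic S)) with (m (fun x => meas n (fun y => S (hat x y)))).
  rewrite (fun_ext_eq m _ (fun _ => 0)) by exact Hsec; apply pr_const, Hm.
Qed.

Definition prefix_union (E : nat -> T -> Prop) (n : nat) (x : T) : Prop :=
  exists k, (k < n)%nat /\ E k x.

Definition disjointed (E : nat -> T -> Prop) (j : nat) (x : T) : Prop :=
  E j x /\ ~ prefix_union E j x.

Lemma disjointed_disjoint E j k x :
  disjointed E j x -> disjointed E k x -> j = k.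
Proof.
  intros [Hj Gj] [Hk Gk].
  destruct (Nat.lt_total j k) as [h | [h | h]]; auto.
  - exfalso; apply Gk; exists j; auto.
  - exfalso; apply Gj; exists k; auto.
Qed.

Lemma meas_prefix_union_eq0 m E n : isPr m ->
  (forall k, (k < n)%nat -> meas m (E k) = 0) -> meas m (prefix_union E n) = 0.
Proof.
  intros Hm; induction n as [| n IH]; intros HE.
  - apply meas_empty; auto; intros x [k [Hk _]]; lia.
  - apply Rle_antisym; [| apply meas_01, Hm].
    rewrite <- (Rplus_0_r 0), <- (IH ltac:(auto)) at 1.
    rewrite <- (HE n ltac:(lia)).
    eapply Rle_trans; [| apply meas_union_le, Hm].
    apply meas_mono; auto.
    intros x [k [Hk Hx]].
    destruct (Nat.eq_dec k n) as [-> | Hkn]; [right; exact Hx |].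
    left; exists k; split; [lia | exact Hx].
Qed.

Lemma meas_disjointed_eq1 m E j : isPr m ->
  meas m (E j) = 1 -> (forall k, (k < j)%nat -> meas m (E k) = 0) ->
  meas m (disjointed E j) = 1.
Proof.
  intros Hm HEj Hprev; apply Rle_antisym; [apply meas_01, Hm |].
  rewrite <- HEj, <- (Rplus_0_r (meas m (disjointed E j))).
  rewrite <- (meas_prefix_union_eq0 m E j Hm Hprev).
  eapply Rle_trans; [| apply meas_union_le, Hm].
  apply meas_mono; auto.
  intros x Hx; destruct (classic (prefix_union E j x)); [right | left; split]; auto.
Qed.

Lemma disjointed_separating (mus : nat -> Fun) E : (forall i, isPr (mus i)) ->
  (forall i j, meas (mus i) (E j) = if Nat.eqb i j then 1 else 0) ->
  forall i j, meas (mus i) (disjointed E j) = if Nat.eqb i j then 1 else 0.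
Proof.
  intros Hpr HE i j.
  destruct (Nat.eqb_spec i j) as [<- | Hij].
  - apply meas_disjointed_eq1; auto.
    + rewrite HE, Nat.eqb_refl; reflexivity.
    + intros k Hk; rewrite HE; destruct (Nat.eqb_spec i k); [lia | reflexivity].
  - apply Rle_antisym; [| apply meas_01, Hpr].
    replace 0 with (meas (mus i) (E j))
      by (rewrite HE; destruct (Nat.eqb_spec i j); [lia | reflexivity]).
    apply meas_mono; auto; intros x [Hx _]; exact Hx.
Qed.

Lemma limit_point_avoids (mus : nat -> Fun) (mu : Fun) (j : nat) : exists (fs : list (T -> R)) (eps : R),
  (forall f, In f fs -> bounded f) /\ 0 < eps /\
  forall i, ~ feq (mus i) mu ->
    (forall f, In f fs -> Rabs (mus i f - mu f) < eps) -> i <> j.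
Proof.
  destruct (classic (feq (mus j) mu)) as [Hj | Hj].
  - exists nil, 1; split; [intros f [] | split; [lra |]].
    intros i Hi _ ->; contradiction.
  - apply not_all_ex_not in Hj as [g Hg].
    apply imply_to_and in Hg as [Hgb Hg].
    exists (g :: nil), (Rabs (mus j g - mu g)).
    split; [intros f [<- | []]; exact Hgb | split].
    + apply Rabs_pos_lt; intro; apply Hg; lra.
    + intros i _ Hi ->; specialize (Hi g (or_introl eq_refl)); lra.
Qed.

Lemma limit_point_const (mus : nat -> Fun) (mu : Fun) f c (j : nat) :
  weakstar_limit_point mus mu -> bounded f ->
  (forall i, i <> j -> mus i f = c) -> mu f = c.
Proof.
  intros Hlim Hf Hc.
  destruct (limit_point_avoids mus mu j) as (fs & eps & Hfs & Heps & Havoid).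
  destruct (Req_dec (mu f) c) as [| Hne]; [assumption | exfalso].
  assert (Hd : 0 < Rabs (c - mu f)) by (apply Rabs_pos_lt; lra).
  destruct (Hlim (f :: fs) (Rmin eps (Rabs (c - mu f)))) as (i & Hi & Hclose).
  - intros g [<- | Hg]; auto.
  - apply Rmin_pos; assumption.
  - assert (Hij : i <> j).
    { apply Havoid; auto; intros g Hg.
      eapply Rlt_le_trans; [apply Hclose; right; exact Hg | apply Rmin_l]. }
    specialize (Hclose f (or_introl eq_refl)); rewrite (Hc i Hij) in Hclose.
    pose proof (Rmin_r eps (Rabs (c - mu f))); lra.
Qed.

Definition diag_hat (F : nat -> T -> Prop) (z : T) : Prop :=
  match z with one => False | hat a b => exists j, F j a /\ F j b end.

Lemma meas_diag_hat_idempotent m F j : isPr m -> idempotent m ->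
  meas m (F j) = 1 -> meas m (diag_hat F) = 1.
Proof.
  intros Hm Hid HF; apply Rle_antisym; [apply meas_01, Hm |].
  unfold meas; rewrite <- (Hid _ (bounded_indic _)).
  replace 1 with (meas m (F j) * meas m (F j)) by (rewrite HF; ring).
  apply conv_indic_rectangle; auto.
  intros a b Ha Hb; exists j; auto.
Qed.

Lemma conv_diag_hat_eq0 m n F : isPr m -> isPr n ->
  (forall j k x, F j x -> F k x -> j = k) -> (forall j, meas n (F j) = 0) ->
  conv m n (indic (diag_hat F)) = 0.
Proof.
  intros Hm Hn Hdisj HF; apply conv_indic_eq0; auto; intros x.
  destruct (classic (exists j, F j x)) as [[j Hj] | Hx].
  - apply Rle_antisym; [| apply meas_01, Hn].
    rewrite <- (HF j); apply meas_mono; auto.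
    intros y [k [Hk Hy]]; rewrite (Hdisj j k x Hj Hk); exact Hy.
  - apply meas_empty; auto; intros y [k [Hk _]]; eauto.
Qed.

Theorem proposition6p1 :
  forall (mus : nat -> Fun),
    (forall i, isPr (mus i)) ->
    (forall i, idempotent (mus i)) ->
    (exists E : nat -> (T -> Prop),
        forall i j, meas (mus i) (E j) = (if Nat.eqb i j then 1 else 0)) ->
    forall mu : Fun, isPr mu -> weakstar_limit_point mus mu ->
      ~ idempotent mu.
Proof.
  intros mus Hpr Hid [E HE] mu Hmu Hlim Hidmu.
  pose proof (disjointed_separating mus E Hpr HE) as HF.
  set (F := disjointed E) in HF.
  assert (HmuF : forall j, meas mu (F j) = 0).
  { intros j; apply (limit_point_const mus mu _ _ j Hlim (bounded_indic _)).
    intros i Hij; specialize (HF i j).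
    destruct (Nat.eqb_spec i j); [lia | exact HF]. }
  assert (Hdiag1 : meas mu (diag_hat F) = 1).
  { apply (limit_point_const mus mu _ _ 0 Hlim (bounded_indic _)).
    intros i _; apply (meas_diag_hat_idempotent _ _ i); auto.
    specialize (HF i i); rewrite Nat.eqb_refl in HF; exact HF. }
  assert (Hdiag0 : meas mu (diag_hat F) = 0).
  { unfold meas; rewrite <- (Hidmu _ (bounded_indic _)).
    apply conv_diag_hat_eq0; auto; apply disjointed_disjoint. }
  lra.
Qed.
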